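(* Let $G$ be a finite group and let $\pi$ be a set of primes. Then \[|\mathrm{Ord}(G,\pi)|\ \ge \prod_{C \text{ a chief factor of } G} f_\pi(C),\] where the product is over the chief factors of a chief series of $G$ (with multiplicity).
   Context: For a subset $X$ of a finite group and a set $\pi$ of primes, $\mathrm{Ord}(X,\pi)$ is the set of $\pi$-elements of $X$ (elements all of whose order's prime divisors lie in $\pi$). For $G=S^t$ a direct power of a simple group $S$, define $f_\pi(G)=1$ if $S$ is an abelian $\pi'$-group; $f_\pi(G)=|G|$ if $G$ is an abelian $\pi$-group; and, if $S$ is nonabelian, $f_\pi(G)=\min\{|\mathrm{Ord}(G\alpha,\pi)| : \alpha\in\mathrm{Ord}(\mathrm{Aut}(G),\pi)\}$, where the coset $G\alpha$ is viewed as a subset of $\mathrm{Aut}(G)$ (with $G$ identified with $\mathrm{Inn}(G)$). Every chief factor of a finite group is of the form $S^t$. *)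

From mathcomp Require Import all_boot all_fingroup all_solvable.
Set Implicit Arguments. Unset Strict Implicit. Unset Printing Implicit Defensive.
Local Open Scope group_scope.

Definition Ord (gT : finGroupType) (X : {set gT}) (pi : nat_pred) : {set gT} :=
  [set x in X | pi.-elt x].

Definition Inn (gT : finGroupType) (C : {group gT}) : {set {perm gT}} :=
  [set conj_aut C x | x in C].

(* Abelian case: C is an elementary abelian p-group, hence either a
   pi-group (value |C|) or a pi'-group (value 1).  The minimum is
   taken with seed #|C|, which is harmless: alpha = 1 is a pi-element and the
   coset Inn(C) * 1 has at most #|C| elements. *)
Definition fpi (pi : nat_pred) (gT : finGroupType) (C : {group gT}) : nat :=
  if abelian C then (if pi.-group C then #|C| else 1%N)
  else \big[minn/#|C|]_(a in Aut C | pi.-elt a) #|Ord (Inn C :* a) pi|.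

Definition fpi_factor (pi : nat_pred) (gT : finGroupType)
  (VU : {group gT} * {group gT}) : nat :=
  fpi pi (VU.2 / VU.1)%G.

From mathcomp Require Import all_boot all_fingroup all_solvable.
Set Implicit Arguments. Unset Strict Implicit. Unset Printing Implicit Defensive.
Local Open Scope group_scope.

(* Let N be a normal subgroup of G.  The pi-elements of G
   are partitioned according to their image in G/N, and that image is a
   pi-element of G/N; so it suffices to show that every coset N y which is a
   pi-element of G/N contains at least f_pi(N) pi-elements.  Such a coset
   contains the pi-part x_pi of each of its elements x.  If N is a pi-group,
   every element of N y is a pi-element; if N is an abelian pi'-group,
   f_pi(N) = 1 and N y contains y_pi; if N is nonabelian, the conjugation
   morphism c : N(N) -> Aut(N) maps the pi-elements of N y onto those of
   the coset Inn(N) c(y_pi), because pi-parts commute with morphisms, and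
   c(y_pi) is a pi-element of Aut(N).  This gives
   f_pi(N) |Ord(G/N, pi)| <= |Ord(G, pi)|, and the theorem follows by
   induction along the chief series, using U/V <| G/V and the third
   isomorphism theorem (G/V)/(U/V) ~ G/U. *)

Lemma bigminn_le (I : finType) (x : nat) (P : pred I) (F : I -> nat) j :
  P j -> \big[minn/x]_(i | P i) F i <= F j.
Proof.
move=> Pj; have: j \in index_enum I by rewrite mem_index_enum.
elim: (index_enum I) => [//|i r IHr]; rewrite inE big_cons.
case/predU1P=> [<-|jr]; first by rewrite Pj geq_minl.
by case: (P i); rewrite ?(leq_trans (geq_minr _ _)) ?IHr.
Qed.

Lemma card_Ord_isog (gT hT : finGroupType) (A : {group gT}) (B : {group hT})
    (pi : nat_pred) :
  A \isog B -> #|Ord A pi| = #|Ord B pi|.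
Proof.
case/isogP=> f injf <-.
have sOA : Ord A pi \subset A by apply/subsetP=> x; rewrite inE => /andP[].
rewrite -(card_injm injf sOA); congr #|pred_of_set _|; apply/esym.
apply/setP=> y; rewrite !inE; apply/andP/morphimP.
- case=> /morphimP[x Ax _ ->] pfx; exists x => //.
  by rewrite inE Ax /p_elt -(order_injm injf Ax).
- case=> x Ax /setIdP[_ px] ->; split; first exact: mem_morphim.
  by rewrite /p_elt (order_injm injf Ax).
Qed.

Lemma groupconstt (gT : finGroupType) (H : {group gT}) (pi : nat_pred) x :
  x \in H -> x.`_pi \in H.
Proof. by move=> Hx; apply: subsetP (cycle_constt pi x); rewrite cycle_subG. Qed.

Lemma mem_rcoset_norm (gT : finGroupType) (N : {group gT}) x y :
  y \in 'N(N) -> x \in N :* y -> x \in 'N(N).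
Proof. by move=> nNy /rcosetP[n Nn ->]; rewrite groupM // (subsetP (normG N)). Qed.

Lemma coset_rcoset (gT : finGroupType) (N : {group gT}) x y :
  y \in 'N(N) -> x \in N :* y -> coset N x = coset N y.
Proof.
move=> nNy Nyx.
exact/(rcoset_kercosetP (mem_rcoset_norm nNy Nyx) nNy).
Qed.

Section PiPartsInCosets.

Variables (gT : finGroupType) (pi : nat_pred) (N : {group gT}).

Lemma constt'_coset x :
  x \in 'N(N) -> pi.-elt (coset N x) -> x.`_pi^' \in N.
Proof.
move=> nNx px; apply: coset_idr; first exact: groupconstt.
by rewrite (morph_constt (coset_morphism N)) //=; apply/constt1P; rewrite p_eltNK.
Qed.

Lemma constt_mem_rcoset x :
  x \in 'N(N) -> pi.-elt (coset N x) -> x.`_pi \in N :* x.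
Proof.
move=> nNx px; rewrite norm_rlcoset // mem_lcoset.
by rewrite -{1}(consttC pi x) invMg mulgKV groupV constt'_coset.
Qed.

End PiPartsInCosets.

Section FiberOfAPiElement.

Variables (gT : finGroupType) (pi : nat_pred) (N : {group gT}) (y : gT).
Hypotheses (nNy : y \in 'N(N)) (piNy : pi.-elt (coset N y)).

Lemma Ord_rcoset_constt x : x \in N :* y -> x.`_pi \in Ord (N :* y) pi.
Proof.
move=> Nyx; have nNx := mem_rcoset_norm nNy Nyx.
have px : pi.-elt (coset N x) by rewrite (coset_rcoset nNy Nyx).
by rewrite inE p_elt_constt -(rcoset_eqP Nyx) constt_mem_rcoset.
Qed.

Lemma Ord_rcoset_pgroup : pi.-group N -> Ord (N :* y) pi = N :* y.
Proof.
move=> piN; apply/setP=> x; rewrite inE andb_idr // => Nyx.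
have nNx := mem_rcoset_norm nNy Nyx.
have px : pi.-elt (coset N x) by rewrite (coset_rcoset nNy Nyx).
have x'N := constt'_coset nNx px.
rewrite -p_eltNK; apply/constt1P/eqP; rewrite -order_eq1.
by apply/eqP/(pnat_1 (mem_p_elt piN x'N)); apply: p_elt_constt.
Qed.

Lemma Ord_Inn_coset_sub :
  Ord (Inn N :* conj_aut N y.`_pi) pi \subset conj_aut N @: Ord (N :* y) pi.
Proof.
have Nyz : y.`_pi \in N :* y by case/setIdP: (Ord_rcoset_constt (rcoset_refl N y)).
apply/subsetP=> b /setIdP[/rcosetP[c /imsetP[n Nn ->] ->]].
have nNn : n \in 'N(N) by rewrite (subsetP (normG N)).
rewrite -conj_aut_morphM ?groupconstt // => pb.
have Nyx : n * y.`_pi \in N :* y by rewrite -(rcoset_eqP Nyz) mem_mulg ?set11.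
apply/imsetP; exists (n * y.`_pi).`_pi; first exact: Ord_rcoset_constt.
rewrite (morph_constt (conj_aut_morphism N)) ?(mem_rcoset_norm nNy) //=.
exact/esym/constt_p_elt.
Qed.

Lemma fpi_le_Ord_rcoset : fpi pi N <= #|Ord (N :* y) pi|.
Proof.
rewrite /fpi; case: ifP => abN.
  case: ifP => piN; first by rewrite Ord_rcoset_pgroup // card_rcoset.
  by apply/card_gt0P; exists y.`_pi; apply/Ord_rcoset_constt/rcoset_refl.
set a := conj_aut N y.`_pi.
have Aa : a \in Aut N.
  by apply: subsetP (Aut_conj_aut N 'N(N)) _ _; rewrite mem_morphim ?groupconstt.
have pa : pi.-elt a by apply: morph_p_elt; rewrite ?groupconstt ?p_elt_constt.
apply: leq_trans (@bigminn_le _ _ _ _ a _) _; first by rewrite Aa pa.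
apply: leq_trans (leq_imset_card (conj_aut N) _).
exact/subset_leq_card/Ord_Inn_coset_sub.
Qed.

End FiberOfAPiElement.

(* Counting pi-elements of G fiberwise over G/N. *)
Lemma fpi_mul_Ord_quotient (gT : finGroupType) (G N : {group gT}) (pi : nat_pred) :
  N <| G -> fpi pi N * #|Ord (G / N) pi| <= #|Ord G pi|.
Proof.
case/andP=> sNG nNG.
rewrite -[#|Ord G pi|]sum1_card (partition_big (coset N) (mem (G / N))) /=; last first.
  by move=> x /setIdP[Gx _]; apply: mem_quotient.
rewrite mulnC -sum_nat_const big_mkcond [X in _ <= X]big_mkcond /=.
apply: leq_sum => c _; case: ifP => //; rewrite inE => /andP[Gc pc]; rewrite Gc.
case/morphimP: Gc => y nNy Gy Ec; rewrite sum1dep_card.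
apply: leq_trans (fpi_le_Ord_rcoset nNy _) _; first by rewrite -Ec.
apply/subset_leq_card/subsetP => x /setIdP[Nyx px].
have Gx : x \in G.
  by case/rcosetP: Nyx => n Nn ->; rewrite groupM // (subsetP sNG).
by rewrite !inE Gx px (coset_rcoset nNy Nyx) Ec eqxx.
Qed.

Lemma fpi_chief_series_quotient (gT : finGroupType) (G V : {group gT})
    (pi : nat_pred) (s : seq {group gT}) :
  V <| G -> (G.-chief).-series V s -> last V s = G ->
  \prod_(VU <- zip (V :: s) s) fpi_factor pi VU <= #|Ord (G / V) pi|.
Proof.
elim: s V => [|U s IH] V nVG /=.
  move=> _ <-; rewrite big_nil; apply/card_gt0P; exists 1.
  by rewrite inE group1 p_elt1.
case/andP=> /andP[/maxnormal_sub sVU nUG] chief_s last_s; rewrite big_cons /=.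
apply: leq_trans (leq_mul (leqnn _) (IH U nUG chief_s last_s)) _.
rewrite -(card_Ord_isog pi (third_isog sVU nVG nUG)).
exact: fpi_mul_Ord_quotient (quotient_normal V nUG).
Qed.

Theorem lemma2p1 (gT : finGroupType) (G : {group gT}) (pi : nat_pred)
  (s : seq {group gT}) :
  (G.-chief).-series 1%G s -> last 1%G s = G ->
  (\prod_(VU <- zip (1%G :: s) s) fpi_factor pi VU <= #|Ord G pi|)%N.
Proof.
move=> chief_s last_s.
rewrite (card_Ord_isog pi (quotient1_isog G)).
exact: fpi_chief_series_quotient (normal1 G) chief_s last_s.
Qed.
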